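(* Let $\mathcal{D}$ be a derivation in $\mathbf{Reg}$ (respectively in $\mathbf{Reg}^{+}$) with conclusion $\lambda\vec{x}.M$. Then every path in $\mathcal{D}$ from the conclusion upwards corresponds to a $\to_{\mathrm{reg}}$-rewrite sequence (respectively a $\to_{\mathrm{reg}^+}$-rewrite sequence) starting at $\lambda\vec{x}.M$, where passes over instances of (FIX) correspond to empty steps, passes over instances of $(@)$ to the left premise and to the right premise correspond to $\to_{@_0}$- and $\to_{@_1}$-steps respectively, and passes over instances of $(\lambda)$ and of $(\mathrm{del})$ (respectively $(\mathrm{del}^+)$) correspond to $\to_{\lambda}$-steps and $\to_{\mathrm{compress}}$-steps (respectively $\to_{\mathrm{del}^+}$-steps). The same holds for (finite or infinite) cyclic paths in $\mathcal{D}$ that return, possibly repeatedly, from a marked assumption at the top down to the conclusion of the instance of (FIX) at which that assumption is discharged.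
   Context: Infinite $\lambda$-terms are possibly infinite terms built from variables, abstractions and applications, modulo $\alpha$-equivalence. A prefixed term is $\lambda x_1\ldots x_n.M$ ($n\ge0$, distinct variables, a separate abstraction prefix) with $M$ an infinite $\lambda$-term whose free variables are among the $x_i$. Proof system $\mathbf{Reg}^{+}$ (finite natural-deduction trees of prefixed terms): axiom (nlvar) $\lambda\vec{x}y.y$; $(\lambda)$: from $\lambda\vec{x}y.M_0$ infer $\lambda\vec{x}.\lambda y.M_0$; $(@)$: from $\lambda\vec{x}.M_0$ (left premise) and $\lambda\vec{x}.M_1$ (right premise) infer $\lambda\vec{x}.(M_0\,M_1)$; $(\mathrm{del}^{+})$: from $\lambda x_1\ldots x_{n-1}.M$ infer $\lambda x_1\ldots x_n.M$ if $x_n$ is not free in $M$; (FIX,$u$): from a derivation $\mathcal{D}_0$ of depth $\ge1$ of $\lambda\vec{x}.M$ possibly using open assumptions $[\lambda\vec{x}.M]^u$, infer $\lambda\vec{x}.M$ discharging them. $\mathbf{Reg}$: as $\mathbf{Reg}^{+}$ but with axiom only $\lambda y.y$ and with $(\mathrm{del}^{+})$ replaced by $(\mathrm{del})$: from $\lambda x_1\ldots x_{i-1}x_{i+1}\ldots x_n.M$ infer $\lambda x_1\ldots x_n.M$ if $x_i$ is not free in $M$. Rewrite relations on prefixed terms: $\lambda\vec{x}.\lambda y.M\to_{\lambda}\lambda\vec{x}y.M$; $\lambda\vec{x}.(M_0\,M_1)\to_{@_i}\lambda\vec{x}.M_i$ for $i\in\{0,1\}$; $\lambda x_1\ldots x_n.M\to_{\mathrm{compress}}\lambda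 x_1\ldots x_{i-1}x_{i+1}\ldots x_n.M$ if $x_i$ not free in $M$; $\lambda x_1\ldots x_n.M\to_{\mathrm{del}^+}\lambda x_1\ldots x_{n-1}.M$ if $x_n$ not free in $M$. $\to_{\mathrm{reg}}$ is the union of $\to_\lambda,\to_{@_0},\to_{@_1},\to_{\mathrm{compress}}$; $\to_{\mathrm{reg}^+}$ is the union of $\to_\lambda,\to_{@_0},\to_{@_1},\to_{\mathrm{del}^+}$. *)

(* Infinite lambda-terms (coinductive, de Bruijn indices, so
   alpha-equivalence is built in; bisimilarity is the equality of infinite terms),
   prefixed terms, the proof systems Reg / Reg+ as finite derivation trees,
   paths (including cyclic back-edges), and the rewrite relations. *)
From Stdlib Require Import List Arith PeanoNat.
Import ListNotations.

CoInductive term : Type :=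
| tvar : nat -> term
| tlam : term -> term
| tapp : term -> term -> term.

CoInductive bisim : term -> term -> Prop :=
| bis_var n : bisim (tvar n) (tvar n)
| bis_lam s t : bisim s t -> bisim (tlam s) (tlam t)
| bis_app s0 s1 t0 t1 : bisim s0 t0 -> bisim s1 t1 -> bisim (tapp s0 s1) (tapp t0 t1).

Inductive occurs : nat -> term -> Prop :=
| occ_var k : occurs k (tvar k)
| occ_lam k M : occurs (S k) M -> occurs k (tlam M)
| occ_app0 k M0 M1 : occurs k M0 -> occurs k (tapp M0 M1)
| occ_app1 k M0 M1 : occurs k M1 -> occurs k (tapp M0 M1).

(* [lower j M]: remove the (non-occurring) free variable of index j, i.e.
   decrement all free indices above j *)
CoFixpoint lower (j : nat) (t : term) : term :=
  match t with
  | tvar k => tvar (if k <? j then k else k - 1)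
  | tlam s => tlam (lower (S j) s)
  | tapp a b => tapp (lower j a) (lower j b)
  end.

(* lambda x_1 ... x_n . M  is represented by arity n and body M, where the
   prefix variable x_i has de Bruijn index n - i (x_n is index 0);
   free variables of M are among the x_i. *)
Record pterm : Type := PT {
  arity : nat;
  body : term;
  pwf : forall k, occurs k body -> k < arity }.

Definition peq (s t : pterm) : Prop := arity s = arity t /\ bisim (body s) (body t).

Definition lam_step (s t : pterm) : Prop :=
  exists M, bisim (body s) (tlam M) /\ arity t = S (arity s) /\ bisim (body t) M.

Definition app_step (i : bool) (s t : pterm) : Prop :=
  exists M0 M1, bisim (body s) (tapp M0 M1) /\ arity t = arity s /\
    bisim (body t) (if i then M1 else M0).

(* remove x_i (index j = n - i) not free in M *)
Definition compress_step (s t : pterm) : Prop :=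
  exists j, j < arity s /\ ~ occurs j (body s) /\ arity t = arity s - 1 /\
    bisim (body t) (lower j (body s)).

(* remove x_n (index 0) not free in M *)
Definition delp_step (s t : pterm) : Prop :=
  0 < arity s /\ ~ occurs 0 (body s) /\ arity t = arity s - 1 /\
    bisim (body t) (lower 0 (body s)).

Inductive system : Type := Reg | RegPlus.

Inductive deriv : Type :=
| dAx   : pterm -> deriv
| dLam  : pterm -> deriv -> deriv
| dApp  : pterm -> deriv -> deriv -> deriv
| dDel  : pterm -> deriv -> deriv
| dFix  : nat -> pterm -> deriv -> deriv
| dAssm : nat -> pterm -> deriv.

Definition concl (d : deriv) : pterm :=
  match d with
  | dAx c | dLam c _ | dApp c _ _ | dDel c _ | dFix _ c _ | dAssm _ c => c
  end.

Definition is_leaf (d : deriv) : Prop :=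
  match d with dAx _ | dAssm _ _ => True | _ => False end.

Fixpoint lookup (u : nat) (G : list (nat * pterm)) : option pterm :=
  match G with
  | [] => None
  | (v, c) :: G' => if Nat.eqb u v then Some c else lookup u G'
  end.

(* [valid sys G d]: d is a correct derivation in sys, whose open assumptions
   are discharged by the FIX instances recorded in G (innermost first). *)
Inductive valid (sys : system) : list (nat * pterm) -> deriv -> Prop :=
| v_ax G c :
    match sys with
    | Reg => arity c = 1
    | RegPlus => 1 <= arity c
    end ->
    bisim (body c) (tvar 0) -> valid sys G (dAx c)
| v_lam G c d :
    lam_step c (concl d) -> valid sys G d -> valid sys G (dLam c d)
| v_app G c d0 d1 :
    (exists M0 M1, bisim (body c) (tapp M0 M1) /\
       arity (concl d0) = arity c /\ bisim (body (concl d0)) M0 /\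
       arity (concl d1) = arity c /\ bisim (body (concl d1)) M1) ->
    valid sys G d0 -> valid sys G d1 -> valid sys G (dApp c d0 d1)
| v_del G c d :
    (exists j, match sys with Reg => j < arity c | RegPlus => j = 0 /\ 0 < arity c end /\
       ~ occurs j (body c) /\ arity (concl d) = arity c - 1 /\
       bisim (body (concl d)) (lower j (body c))) ->
    valid sys G d -> valid sys G (dDel c d)
| v_fix G u c d :
    ~ is_leaf d -> peq (concl d) c -> valid sys ((u, c) :: G) d ->
    valid sys G (dFix u c d)
| v_assm G u c c' :
    lookup u G = Some c' -> peq c c' -> valid sys G (dAssm u c).

Definition child (d : deriv) (k : nat) : option deriv :=
  match d, k with
  | dLam _ d0, 0 => Some d0
  | dApp _ d0 _, 0 => Some d0
  | dApp _ _ d1, 1 => Some d1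
  | dDel _ d0, 0 => Some d0
  | dFix _ _ d0, 0 => Some d0
  | _, _ => None
  end.

Fixpoint subtree (d : deriv) (p : list nat) : option deriv :=
  match p with
  | [] => Some d
  | k :: p' => match child d k with Some d' => subtree d' p' | None => None end
  end.

Inductive mkind : Type := MEmpty | MLam | MApp0 | MApp1 | MDel.

(* one step of a (possibly cyclic) path in d: upwards to a premise, or back
   from a marked assumption to the conclusion of the FIX instance discharging
   it (the nearest FIX below it with the same label) *)
Inductive move (d : deriv) : list nat -> list nat -> mkind -> Prop :=
| mv_fix p u c d0 : subtree d p = Some (dFix u c d0) -> move d p (p ++ [0]) MEmpty
| mv_lam p c d0 : subtree d p = Some (dLam c d0) -> move d p (p ++ [0]) MLam
| mv_app0 p c d0 d1 : subtree d p = Some (dApp c d0 d1) -> move d p (p ++ [0]) MApp0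
| mv_app1 p c d0 d1 : subtree d p = Some (dApp c d0 d1) -> move d p (p ++ [1]) MApp1
| mv_del p c d0 : subtree d p = Some (dDel c d0) -> move d p (p ++ [0]) MDel
| mv_back q r u c c' d0 :
    subtree d (q ++ r) = Some (dAssm u c) ->
    subtree d q = Some (dFix u c' d0) ->
    r <> [] ->
    (forall r1 r2 c'' d'', r = r1 ++ r2 -> r1 <> [] -> r2 <> [] ->
        subtree d (q ++ r1) <> Some (dFix u c'' d'')) ->
    move d (q ++ r) q MEmpty.

Definition concl_at (d : deriv) (p : list nat) : option pterm :=
  option_map concl (subtree d p).

Definition step (sys : system) (k : mkind) (s t : pterm) : Prop :=
  match k with
  | MEmpty => peq s t
  | MLam => lam_step s t
  | MApp0 => app_step false s t
  | MApp1 => app_step true s t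
  | MDel => match sys with Reg => compress_step s t | RegPlus => delp_step s t end
  end.

(* Every rule of Reg and Reg+ relates its conclusion to each premise exactly
   as the corresponding rewrite step does, so each upward pass along a path is
   a rewrite step.  A back-edge runs from a marked assumption [c]^u to the
   conclusion c' of the FIX instance discharging it; validity records c' in the
   context of every subderivation between the two, and the assumption rule
   forces c and c' to coincide, so the back-edge is an empty step. *)

From Stdlib Require Import List Arith PeanoNat.
Import ListNotations.

CoFixpoint bisim_sym s t : bisim s t -> bisim t s.
Proof.
  intros H; destruct H; constructor; apply bisim_sym; assumption.
Qed.

Lemma peq_sym s t : peq s t -> peq t s.
Proof.
  intros [Ha Hb]; split; [symmetry | apply bisim_sym]; assumption.
Qed.

Lemma subtree_app d p p' :
  subtree d (p ++ p') =
  match subtree d p with Some e => subtree e p' | None => None end.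
Proof.
  revert d; induction p as [|a p IH]; intros d; simpl; [reflexivity|].
  destruct (child d a); [apply IH | reflexivity].
Qed.

Definition premise_context (e : deriv) (G : list (nat * pterm)) :=
  match e with dFix u c _ => (u, c) :: G | _ => G end.

Definition pass_kind (e : deriv) (i : nat) : mkind :=
  match e, i with
  | dLam _ _, _ => MLam
  | dApp _ _ _, 0 => MApp0
  | dApp _ _ _, _ => MApp1
  | dDel _ _, _ => MDel
  | _, _ => MEmpty
  end.

Lemma valid_child sys G e i e' :
  valid sys G e -> child e i = Some e' -> valid sys (premise_context e G) e'.
Proof.
  intros Hv Hc.
  destruct e; destruct i as [|[|i]]; simpl in Hc; try discriminate;
    injection Hc as <-; inversion Hv; subst; assumption.
Qed.

Lemma valid_subtree sys p : forall G d d',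
  valid sys G d -> subtree d p = Some d' -> exists G', valid sys G' d'.
Proof.
  induction p as [|i p IH]; intros G d d' Hv Hs; simpl in Hs.
  - injection Hs as <-; exists G; exact Hv.
  - destruct (child d i) as [e|] eqn:Hc; [|discriminate].
    exact (IH _ _ _ (valid_child _ _ _ _ _ Hv Hc) Hs).
Qed.

Lemma valid_premise_step sys G e i e' :
  valid sys G e -> child e i = Some e' ->
  step sys (pass_kind e i) (concl e) (concl e').
Proof.
  intros Hv Hc.
  destruct e; destruct i as [|[|i]]; simpl in Hc; try discriminate;
    injection Hc as <-; inversion Hv; subst; simpl.
  - assumption.
  - match goal with H : exists _ _, _ |- _ =>
      destruct H as (M0 & M1 & Hb & Ha & HM & _) end; exists M0, M1; auto.
  - match goal with H : exists _ _, _ |- _ =>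
      destruct H as (M0 & M1 & Hb & _ & _ & Ha & HM) end; exists M0, M1; auto.
  - match goal with H : exists _, _ |- _ =>
      destruct H as (j & Hj & Hocc & Ha & Hlow) end; destruct sys.
    + exists j; auto.
    + destruct Hj as [-> Hpos]; repeat split; assumption.
  - apply peq_sym; assumption.
Qed.

Lemma lookup_premise_context u e G :
  (forall c d, e <> dFix u c d) -> lookup u (premise_context e G) = lookup u G.
Proof.
  intros Hnofix; destruct e; try reflexivity; simpl.
  destruct (Nat.eqb_spec u n) as [->|]; [|reflexivity].
  exfalso; exact (Hnofix _ _ eq_refl).
Qed.

Lemma valid_assm_peq_lookup sys r : forall G e u c c',
  valid sys G e -> subtree e r = Some (dAssm u c) ->
  (forall r1 r2 c'' d'', r = r1 ++ r2 -> r2 <> [] ->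
     subtree e r1 <> Some (dFix u c'' d'')) ->
  lookup u G = Some c' -> peq c c'.
Proof.
  induction r as [|i r IH]; intros G e u c c' Hv Hs Hnofix Hl; simpl in Hs.
  - injection Hs as ->; inversion Hv; subst; congruence.
  - destruct (child e i) as [e'|] eqn:Hc; [|discriminate].
    apply (IH (premise_context e G) e' u c c' (valid_child _ _ _ _ _ Hv Hc) Hs).
    + intros r1 r2 c'' d'' -> Hr2 Hfix.
      apply (Hnofix (i :: r1) r2 c'' d'' eq_refl Hr2); simpl; rewrite Hc; exact Hfix.
    + rewrite lookup_premise_context; [exact Hl|].
      intros c'' d'' ->; exact (Hnofix [] (i :: r) c'' d'' eq_refl ltac:(discriminate) eq_refl).
Qed.

Lemma back_edge_peq sys d q r u c c' d0 :
  valid sys [] d ->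
  subtree d (q ++ r) = Some (dAssm u c) ->
  subtree d q = Some (dFix u c' d0) ->
  r <> [] ->
  (forall r1 r2 c'' d'', r = r1 ++ r2 -> r1 <> [] -> r2 <> [] ->
     subtree d (q ++ r1) <> Some (dFix u c'' d'')) ->
  peq c c'.
Proof.
  intros Hv Hassm Hfix Hr Hnofix.
  destruct (valid_subtree _ _ _ _ _ Hv Hfix) as [G HvFix].
  rewrite subtree_app, Hfix in Hassm.
  destruct r as [|i r]; [congruence|].
  destruct i as [|[|i]]; simpl in Hassm; try discriminate.
  apply (valid_assm_peq_lookup sys r ((u, c') :: G) d0 u c c'
           (valid_child _ _ _ 0 _ HvFix eq_refl) Hassm).
  - intros r1 r2 c'' d'' -> Hr2 Hfix'.
    apply (Hnofix (0 :: r1) r2 c'' d'' eq_refl ltac:(discriminate) Hr2).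
    rewrite subtree_app, Hfix; exact Hfix'.
  - simpl; rewrite Nat.eqb_refl; reflexivity.
Qed.

Lemma move_step sys d p q k :
  valid sys [] d -> move d p q k ->
  exists s t, concl_at d p = Some s /\ concl_at d q = Some t /\ step sys k s t.
Proof.
  intros Hv Hm; unfold concl_at.
  destruct Hm as [p u c d0 Hp | p c d0 Hp | p c d0 d1 Hp | p c d0 d1 Hp
                 | p c d0 Hp | q r u c c' d0 Hassm Hfix Hr Hnofix].
  1-5: rewrite subtree_app, Hp; simpl; do 2 eexists;
       split; [reflexivity | split; [reflexivity|]];
       destruct (valid_subtree _ _ _ _ _ Hv Hp) as [G Hnode].
  - exact (valid_premise_step _ _ _ 0 _ Hnode eq_refl).
  - exact (valid_premise_step _ _ _ 0 _ Hnode eq_refl).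
  - exact (valid_premise_step _ _ _ 0 _ Hnode eq_refl).
  - exact (valid_premise_step _ _ _ 1 _ Hnode eq_refl).
  - exact (valid_premise_step _ _ _ 0 _ Hnode eq_refl).
  - rewrite Hassm, Hfix; do 2 eexists; split; [reflexivity | split; [reflexivity|]].
    exact (back_edge_peq _ _ _ _ _ _ _ _ Hv Hassm Hfix Hr Hnofix).
Qed.

Theorem mainTheorem2 :
  forall (sys : system) (d : deriv),
    valid sys [] d ->
    (forall (n : nat) (f : nat -> list nat) (k : nat -> mkind),
        f 0 = [] ->
        (forall i, i < n -> move d (f i) (f (S i)) (k i)) ->
        forall i, i < n ->
          exists s t, concl_at d (f i) = Some s /\ concl_at d (f (S i)) = Some t /\
                      step sys (k i) s t) /\
    (forall (f : nat -> list nat) (k : nat -> mkind),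
        f 0 = [] ->
        (forall i, move d (f i) (f (S i)) (k i)) ->
        forall i,
          exists s t, concl_at d (f i) = Some s /\ concl_at d (f (S i)) = Some t /\
                      step sys (k i) s t).
Proof.
  intros sys d Hv; split.
  - intros n f k _ Hpath i Hi; exact (move_step _ _ _ _ _ Hv (Hpath i Hi)).
  - intros f k _ Hpath i; exact (move_step _ _ _ _ _ Hv (Hpath i)).
Qed.
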